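(* Let $N\ge 1$, let $z_1,\dots,z_N\in\mathbb{C}^*$ and $n_1,\dots,n_N\in\mathbb{C}$. Then the assignment \[ X\mapsto \sum_{i=1}^N z_1^{-1}\cdots z_{i-1}^{-1}\,z_{i+1}\cdots z_N\,a_i,\qquad Y\mapsto \sum_{i=1}^N z_1^{-1}\cdots z_{i-1}^{-1}\,(z_i^2-z_i^{-2})\,z_{i+1}\cdots z_N\,b_i, \] \[ t\mapsto z_1\cdots z_N,\qquad G\mapsto \sum_{i=1}^N (n_i+a_ib_i) \] defines a unique (super)algebra homomorphism $\Phi_{\mathbf n,\mathbf z}:U_q(\mathfrak{gl}(1|1))\to \mathrm{Cl}_N$. Moreover, the $U_q(\mathfrak{gl}(1|1))$-module obtained by pulling back the $\mathrm{Cl}_N$-module $U_N$ along $\Phi_{\mathbf n,\mathbf z}$ is isomorphic to the tensor product representation $V_{z_1,n_1}\otimes\cdots\otimes V_{z_N,n_N}$.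
   Context: All algebras are over $\mathbb{C}$ and are superalgebras (i.e. $\mathbb{Z}/2$-graded). $U_q(\mathfrak{gl}(1|1))$ denotes the superalgebra generated by odd elements $X,Y$ and even elements $G$, $t$, $t^{-1}$ subject to the relations $tt^{-1}=t^{-1}t=1$, $XY+YX=t^2-t^{-2}$, $X^2=Y^2=0$, $GX-XG=X$, $GY-YG=-Y$, and $t$ commutes with $X,Y,G$. It is a Hopf superalgebra with coproduct $\Delta X=X\otimes t+t^{-1}\otimes X$, $\Delta Y=Y\otimes t+t^{-1}\otimes Y$, $\Delta t=t\otimes t$, $\Delta G=G\otimes 1+1\otimes G$; tensor products of modules are formed via $\Delta$ using the Koszul sign rule $(a\otimes b)(x\otimes y)=(-1)^{|b||x|}ax\otimes by$. For $z\in\mathbb{C}^*$, $n\in\mathbb{C}$, $V_{z,n}$ is the $2$-dimensional module with basis $v$ (even), $u$ (odd) such that $Xv=u$, $Yv=0$, $Gv=nv$, $tv=zv$, $Xu=0$, $Gu=(n+1)u$, $Yu=(z^2-z^{-2})v$, $tu=zu$. $\mathrm{Cl}_N$ is the Clifford superalgebra generated by odd elements $a_1,\dots,a_N,b_1,\dots,b_N$ with relations $a_ia_j+a_ja_i=0$, $b_ib_j+b_jb_i=0$, $a_ib_j+b_ja_i=\delta_{ij}$. $U_N$ is its irreducible $2^N$-dimensional module generated by a vector $v$ with $b_iv=0$ for all $i$; equivalently $U_N=\bigwedge^\bullet U$ with $U=\mathrm{span}(a_1,\dots,a_N)$, $a_i$ acting by left wedge multiplication and $b_i$ by the corresponding contraction,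 with parity given by degree mod 2. *)

From HB Require Import structures.
From mathcomp Require Import all_boot all_order all_algebra.
From mathcomp Require Import complex mxtens.
From mathcomp Require Import Rstruct.
Set Implicit Arguments.
Unset Strict Implicit.
Unset Printing Implicit Defensive.
Import GRing.Theory.
Local Open Scope ring_scope.

Definition C : fieldType := (Rdefinitions.R)[i].

Definition Uq_rels (A : pzRingType) (X Y G t ti : A) : Prop :=
  [/\ t * ti = 1 /\ ti * t = 1,
      X * Y + Y * X = t ^+ 2 - ti ^+ 2,
      X ^+ 2 = 0 /\ Y ^+ 2 = 0,
      G * X - X * G = X /\ G * Y - Y * G = - Y
    & t * X = X * t /\ t * Y = Y * t /\ t * G = G * t].

Definition cliff_rels (A : pzRingType) (N : nat) (a b : 'I_N -> A) : Prop :=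
  forall i j : 'I_N,
    [/\ a i * a j + a j * a i = 0,
        b i * b j + b j * b i = 0
      & a i * b j + b j * a i = (i == j)%:R].

(** A Z/2-grading of a C-algebra A (char 0), encoded by its parity
    involution sigma (sigma = id on the even part, -id on the odd part). *)
Definition is_parity_aut (A : algType C) (sigma : A -> A) : Prop :=
  [/\ forall x y, sigma (x + y) = sigma x + sigma y,
      forall x y, sigma (x * y) = sigma x * sigma y,
      sigma 1 = 1,
      forall (c : C) x, sigma (c *: x) = c *: sigma x
    & forall x, sigma (sigma x) = x].

(** * The images of the generators under Phi_{n,z}.
      [sc] is the embedding of scalars C into the target ring. *)
Section Phi.
Variables (A : pzRingType) (sc : C -> A) (N : nat) (z n : 'I_N -> C)
          (a b : 'I_N -> A).

(** z_1^{-1} ... z_{i-1}^{-1} z_{i+1} ... z_N  (indices from 0 here) *)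
Definition coefX (i : 'I_N) : C :=
  (\prod_(j < N | (j < i)%N) (z j)^-1) * (\prod_(j < N | (i < j)%N) z j).

Definition coefY (i : 'I_N) : C :=
  (\prod_(j < N | (j < i)%N) (z j)^-1) * (z i ^+ 2 - (z i)^-2)
    * (\prod_(j < N | (i < j)%N) z j).

Definition PhiX : A := \sum_(i < N) sc (coefX i) * a i.
Definition PhiY : A := \sum_(i < N) sc (coefY i) * b i.
Definition Phit : A := sc (\prod_(i < N) z i).
Definition Phiti : A := sc ((\prod_(i < N) z i)^-1).
Definition PhiG : A := \sum_(i < N) (sc (n i) + a i * b i).
End Phi.

(** * Finite-dimensional U_q(gl(1|1))-supermodules, given by the
      (column-vector) matrices of the actions of X, Y, G, t, t^{-1}
      on C^sdim, together with the parity of each basis vector. *)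
Record smod := SMod {
  sdim : nat;
  spar : 'I_sdim -> bool;
  sX : 'M[C]_sdim;
  sY : 'M[C]_sdim;
  sG : 'M[C]_sdim;
  st : 'M[C]_sdim;
  sti : 'M[C]_sdim }.
Arguments spar : clear implicits.

Definition smod_iso (M1 M2 : smod) : Prop :=
  exists (P : 'M[C]_(sdim M2, sdim M1)) (Q : 'M[C]_(sdim M1, sdim M2)),
    [/\ Q *m P = 1%:M /\ P *m Q = 1%:M,
        forall i j, P i j != 0 -> spar M2 i = spar M1 j,
        P *m sX M1 = sX M2 *m P /\ P *m sY M1 = sY M2 *m P,
        P *m sG M1 = sG M2 *m P
      & P *m st M1 = st M2 *m P /\ P *m sti M1 = sti M2 *m P].

(** The module V_{z,n}: basis index 0 = v (even), 1 = u (odd). *)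
Definition Vmod (z n : C) : smod :=
  {| sdim := 2;
     spar := fun i => i == 1 :> nat;
     sX := \matrix_(i < 2, j < 2) (if (i == 1 :> nat) && (j == 0 :> nat) then 1 else 0);
     sY := \matrix_(i < 2, j < 2)
             (if (i == 0 :> nat) && (j == 1 :> nat) then z ^+ 2 - z^-2 else 0);
     sG := \matrix_(i < 2, j < 2) (if i == j then n + (i : nat)%:R else 0);
     st := z%:M;
     sti := z^-1%:M |}.

Definition parity_mx (M : smod) : 'M[C]_(sdim M) :=
  \matrix_(i, j) (if i == j then (-1) ^+ spar M i else 0).

(** Tensor product of supermodules via
    Delta X = X (x) t + t^{-1} (x) X, Delta Y = Y (x) t + t^{-1} (x) Y,
    Delta t = t (x) t, Delta G = G (x) 1 + 1 (x) G, with the Koszul sign rule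
    (a (x) b)(x (x) y) = (-1)^{|b||x|} ax (x) by.  Basis vector index
    (i,j) of M1 (x) M2 is mxtens_index (i,j). *)
Definition stensor (M1 M2 : smod) : smod :=
  {| sdim := sdim M1 * sdim M2;
     spar := fun k => spar M1 (mxtens_unindex k).1 (+) spar M2 (mxtens_unindex k).2;
     sX := sX M1 *t st M2 + (sti M1 *m parity_mx M1) *t sX M2;
     sY := sY M1 *t st M2 + (sti M1 *m parity_mx M1) *t sY M2;
     sG := sG M1 *t 1%:M + 1%:M *t sG M2;
     st := st M1 *t st M2;
     sti := sti M1 *t sti M2 |}.

(** The trivial (counit) module; only used for the empty list. *)
Definition triv_mod : smod :=
  {| sdim := 1; spar := fun _ => false; sX := 0; sY := 0; sG := 0;
     st := 1%:M; sti := 1%:M |}.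

Fixpoint tens_list (s : seq (C * C)) : smod :=
  match s with
  | [::] => triv_mod
  | [:: p] => Vmod p.1 p.2
  | p :: s' => stensor (Vmod p.1 p.2) (tens_list s')
  end.

(** * The Clifford module U_N = /\^* span(a_1..a_N), basis e_S indexed by
      subsets S of 'I_N (e_S = a_{s_1} /\ ... /\ a_{s_k}, s_1 < ... < s_k). *)
Definition UNdim (N : nat) : nat := #|{set 'I_N}|.

Definition UNset (N : nat) (k : 'I_(UNdim N)) : {set 'I_N} := enum_val k.

(** a_i: left wedge multiplication. *)
Definition UN_a (N : nat) (i : 'I_N) : 'M[C]_(UNdim N) :=
  \matrix_(r, c)
    (let S := UNset c in
     if (i \notin S) && (UNset r == i |: S)
     then (-1) ^+ #|[set s in S | (s < i)%N]| else 0).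

(** b_i: contraction (odd derivation with b_i(a_j) = delta_ij). *)
Definition UN_b (N : nat) (i : 'I_N) : 'M[C]_(UNdim N) :=
  \matrix_(r, c)
    (let S := UNset c in
     if (i \in S) && (UNset r == S :\ i)
     then (-1) ^+ #|[set s in S | (s < i)%N]| else 0).

Definition UN_pullback (N : nat) (z n : 'I_N -> C) : smod :=
  let sc := fun c : C => (c%:M : 'M[C]_(UNdim N)) in
  {| sdim := UNdim N;
     spar := fun k => odd #|UNset k|;
     sX := PhiX sc z (@UN_a N);
     sY := PhiY sc z (@UN_b N);
     sG := PhiG sc n (@UN_a N) (@UN_b N);
     st := Phit sc z;
     sti := Phiti sc z |}.

(* Part 1 is a computation in any algebra containing a Clifford system: Phi(X) and
   Phi(Y) are linear combinations of the anticommuting a_i, resp. b_i, so they square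
   to zero and anticommute to the scalar sum_i coefX_i coefY_i, which telescopes to
   t^2 - t^-2; and a_i b_i is the i-th number operator, whose commutators with a_j
   and b_j are delta_ij a_j and -delta_ij b_j.

   For part 2, identify the basis vector e_S of U_N (S a subset of {1..N}) with
   e_[1 \in S] (x) e_(S - {1}) in V_{z_1,n_1} (x) U_{N-1}.  In each Phi-sum the term
   i = 1 is the action on the first factor, and the other terms are z_1^-1 (-1)^[1 \in S]
   times the sums for (z_2, ..., z_N), which is the action of t^-1 (-1)^|.| (x) Phi'
   prescribed by the coproduct.  This reindexing of bases is an even isomorphism, and
   induction on N gives the whole tensor product. *)

From Pilot Require Import Defs.
From HB Require Import structures.
From mathcomp Require Import all_boot all_order all_algebra.
From mathcomp Require Import complex mxtens ring Rstruct.
Import GRing.Theory Num.Theory.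
Local Open Scope ring_scope.

Set Implicit Arguments.
Unset Strict Implicit.
Unset Printing Implicit Defensive.

Section LinearCombinations.
Variables (F : fieldType) (A : algType F) (I : finType).

Lemma anticomm_lincomb (a b : I -> A) (c d : I -> F) :
  (forall i j, a i * b j + b j * a i = (i == j)%:R) ->
  (\sum_i c i *: a i) * (\sum_i d i *: b i) + (\sum_i d i *: b i) * (\sum_i c i *: a i)
  = (\sum_i c i * d i)%:A.
Proof.
move=> ab_anti; rewrite !mulr_suml.
under eq_bigr do rewrite mulr_sumr.
under [X in _ + X]eq_bigr do rewrite mulr_sumr.
rewrite [X in _ + X]exchange_big -big_split /= scaler_suml; apply: eq_bigr => i _.
rewrite -big_split /= (bigD1 i) //= big1 ?addr0 => [|j /negbTE ji].
  by rewrite -!scalerAl -!scalerAr !scalerA [d i * c i]mulrC -scalerDr ab_anti eqxx.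
by rewrite -!scalerAl -!scalerAr !scalerA [d j * c i]mulrC -scalerDr ab_anti eq_sym ji scaler0.
Qed.

Lemma sqr_lincomb_eq0 (u : I -> A) (c : I -> F) :
  2%:R != 0 :> F -> (forall i j, u i * u j + u j * u i = 0) ->
  (\sum_i c i *: u i) ^+ 2 = 0.
Proof.
move=> two_neq0 u_anti; set s := \sum_i c i *: u i.
suff : 2%:R *: s ^+ 2 = 0 by move/eqP; rewrite scaler_eq0 (negbTE two_neq0) => /eqP.
rewrite scaler_nat mulr2n expr2.
have -> : s * s = \sum_i \sum_j (c i * c j) *: (u i * u j).
  rewrite mulr_suml; apply: eq_bigr => i _; rewrite mulr_sumr; apply: eq_bigr => j _.
  by rewrite -scalerAl -scalerAr scalerA.
rewrite {2}exchange_big -big_split /=; apply: big1 => i _.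
rewrite -big_split /=; apply: big1 => j _.
by rewrite [c j * c i]mulrC -scalerDr u_anti scaler0.
Qed.

Lemma commr_lincomb (x : A) (c : I -> F) (u : I -> A) :
  x * (\sum_i c i *: u i) - (\sum_i c i *: u i) * x = \sum_i c i *: (x * u i - u i * x).
Proof.
rewrite mulr_suml mulr_sumr -sumrB; apply: eq_bigr => i _.
by rewrite scalerBr -scalerAl -scalerAr.
Qed.

End LinearCombinations.

Section CliffordRelations.
Variables (A : pzRingType) (N : nat) (a b : 'I_N -> A).
Hypothesis cliff : cliff_rels a b.

Lemma cliff_aa i j : a i * a j = - (a j * a i).
Proof. by case: (cliff i j) => aa _ _; apply/eqP; rewrite -addr_eq0 aa. Qed.

Lemma cliff_bb i j : b i * b j = - (b j * b i).
Proof. by case: (cliff i j) => _ bb _; apply/eqP; rewrite -addr_eq0 bb. Qed.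

Lemma cliff_ab i j : a i * b j = (i == j)%:R - b j * a i.
Proof. by case: (cliff i j) => _ _ ab; rewrite -ab addrK. Qed.

Lemma cliff_ba i j : b j * a i = (i == j)%:R - a i * b j.
Proof. by case: (cliff i j) => _ _ ab; rewrite -ab [a i * b j + _]addrC addrK. Qed.

Lemma commr_number_a i j : a i * b i * a j - a j * (a i * b i) = (i == j)%:R * a j.
Proof.
rewrite -mulrA cliff_ba mulrBr mulrA cliff_aa mulNr opprK -mulrA addrK.
by rewrite eq_sym; case: eqP => [->|_]; rewrite ?mulr1 ?mul1r ?mulr0 ?mul0r.
Qed.

Lemma commr_number_b i j : a i * b i * b j - b j * (a i * b i) = - ((i == j)%:R * b j).
Proof.
rewrite -mulrA cliff_bb mulrN [a i * (_ * _)]mulrA cliff_ab mulrBl opprB -!mulrA.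
by rewrite addrAC subrr add0r; case: eqP => [->|_]; rewrite ?mulr1 ?mul1r ?mulr0 ?mul0r ?oppr0.
Qed.

End CliffordRelations.

(* [coefX] alone would resolve to the lemma of poly.v. *)
Local Notation coefX := Defs.coefX.
Local Notation coefY := Defs.coefY.

Section Coefficients.
Variables (N : nat) (z : 'I_N.+1 -> C).
Let z' (j : 'I_N) := z (lift ord0 j).

Lemma coefX_ord0 : coefX z ord0 = \prod_(j < N) z' j.
Proof.
rewrite /coefX big_pred0 // mul1r big_mkcond big_ord_recl ltnn Monoid.mul1m.
by apply: eq_bigr => j _; rewrite /bump.
Qed.

Lemma coefX_lift i : coefX z (lift ord0 i) = (z ord0)^-1 * coefX z' i.
Proof.
rewrite /coefX !(big_mkcond (fun j => (_ < _)%N)) !big_ord_recl /= mul1r -mulrA.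
by do 2 f_equal; apply: eq_bigr => j _; rewrite /bump /= !add1n ltnS.
Qed.

Lemma coefY_ord0 : coefY z ord0 = (z ord0 ^+ 2 - (z ord0)^-2) * \prod_(j < N) z' j.
Proof.
rewrite /coefY big_pred0 // mul1r big_mkcond big_ord_recl ltnn Monoid.mul1m.
by congr (_ * _); apply: eq_bigr => j _; rewrite /bump.
Qed.

Lemma coefY_lift i : coefY z (lift ord0 i) = (z ord0)^-1 * coefY z' i.
Proof.
rewrite /coefY !(big_mkcond (fun j => (_ < _)%N)) !big_ord_recl /= mul1r -!mulrA.
by do 3 f_equal; apply: eq_bigr => j _; rewrite /bump /= !add1n ltnS.
Qed.

End Coefficients.

(* Peeling off z_1 turns the tail of the sum into z_1^-2 times the sum for (z_2, ..., z_N). *)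
Lemma sum_coefXY N (z : 'I_N -> C) :
  \sum_(i < N) coefX z i * coefY z i
  = (\prod_(i < N) z i) ^+ 2 - ((\prod_(i < N) z i)^-1) ^+ 2.
Proof.
elim: N z => [|N IH] z; first by rewrite !big_ord0 invr1 expr1n subrr.
set z' := fun j : 'I_N => z (lift ord0 j).
have tail : \sum_(i < N) coefX z (lift ord0 i) * coefY z (lift ord0 i)
            = (z ord0)^-2 * \sum_(i < N) coefX z' i * coefY z' i.
  rewrite mulr_sumr; apply: eq_bigr => i _; rewrite coefX_lift coefY_lift.
  by rewrite expr2 invfM; ring.
rewrite [LHS]big_ord_recl coefX_ord0 coefY_ord0 tail IH big_ord_recl -/z' !invfM.
ring.
Qed.

Lemma natC2_neq0 : 2%:R != 0 :> C.
Proof. by have : 2%:R != 0 :> (Rdefinitions.R)[i] by rewrite pnatr_eq0. Qed.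

Section PhiRelations.
Variables (A : algType C) (N : nat) (z n : 'I_N -> C) (a b : 'I_N -> A).
Hypothesis cliff : cliff_rels a b.
Local Notation sc := (fun c : C => c%:A).

Lemma PhiX_lincomb : PhiX sc z a = \sum_i coefX z i *: a i.
Proof. by apply: eq_bigr => i _; rewrite mulr_algl. Qed.

Lemma PhiY_lincomb : PhiY sc z b = \sum_i coefY z i *: b i.
Proof. by apply: eq_bigr => i _; rewrite mulr_algl. Qed.

Lemma commr_PhiG (x : A) :
  PhiG sc n a b * x - x * PhiG sc n a b = \sum_i (a i * b i * x - x * (a i * b i)).
Proof.
rewrite mulr_suml mulr_sumr -sumrB; apply: eq_bigr => i _.
by rewrite mulrDl mulrDr mulr_algl mulr_algr opprD addrACA subrr add0r.
Qed.

Lemma commr_PhiG_a j : PhiG sc n a b * a j - a j * PhiG sc n a b = a j.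
Proof.
rewrite commr_PhiG (bigD1 j) //= commr_number_a // eqxx mul1r big1 ?addr0 // => i ij.
by rewrite commr_number_a // (negbTE ij) mul0r.
Qed.

Lemma commr_PhiG_b j : PhiG sc n a b * b j - b j * PhiG sc n a b = - b j.
Proof.
rewrite commr_PhiG (bigD1 j) //= commr_number_b // eqxx mul1r big1 ?addr0 // => i ij.
by rewrite commr_number_b // (negbTE ij) mul0r oppr0.
Qed.

Lemma Uq_rels_Phi : (forall i, z i != 0) ->
  Uq_rels (PhiX sc z a) (PhiY sc z b) (PhiG sc n a b) (Phit sc z) (Phiti sc z).
Proof.
move=> z_neq0; have t_neq0 : \prod_i z i != 0 by apply/prodf_neq0 => i _.
have aa i j : a i * a j + a j * a i = 0 by case: (cliff i j).
have bb i j : b i * b j + b j * b i = 0 by case: (cliff i j).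
have ab i j : a i * b j + b j * a i = (i == j)%:R by case: (cliff i j).
split.
- by rewrite /Phit /Phiti !mulr_algl !scalerA mulfV // mulVf // scale1r.
- rewrite PhiX_lincomb PhiY_lincomb anticomm_lincomb // sum_coefXY.
  by rewrite /Phit /Phiti !expr2 !mulr_algl !scalerA scalerBl.
- by rewrite PhiX_lincomb PhiY_lincomb !sqr_lincomb_eq0 // natC2_neq0.
- rewrite PhiX_lincomb PhiY_lincomb; split.
    by rewrite commr_lincomb; apply: eq_bigr => j _; rewrite commr_PhiG_a.
  by rewrite commr_lincomb -sumrN; apply: eq_bigr => j _; rewrite commr_PhiG_b scalerN.
- by rewrite /Phit !mulr_algl !mulr_algr.
Qed.

Lemma parity_Phi (sigma : A -> A) : is_parity_aut sigma ->
  (forall i, sigma (a i) = - a i /\ sigma (b i) = - b i) ->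
  [/\ sigma (PhiX sc z a) = - PhiX sc z a,
      sigma (PhiY sc z b) = - PhiY sc z b,
      sigma (PhiG sc n a b) = PhiG sc n a b,
      sigma (Phit sc z) = Phit sc z
    & sigma (Phiti sc z) = Phiti sc z].
Proof.
move=> [sigmaD sigmaM sigma1 sigmaZ _] odd_ab.
have sigma0 : sigma 0 = 0 by apply: (addrI (sigma 0)); rewrite -sigmaD !addr0.
have sigma_sum := big_morph sigma sigmaD sigma0.
have sigma_alg (c : C) : sigma c%:A = c%:A by rewrite sigmaZ sigma1.
split.
- rewrite PhiX_lincomb sigma_sum -sumrN; apply: eq_bigr => i _.
  by rewrite sigmaZ (odd_ab i).1 scalerN.
- rewrite PhiY_lincomb sigma_sum -sumrN; apply: eq_bigr => i _.
  by rewrite sigmaZ (odd_ab i).2 scalerN.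
- rewrite sigma_sum; apply: eq_bigr => i _.
  by rewrite sigmaD sigmaM sigma_alg (odd_ab i).1 (odd_ab i).2 mulrNN.
- exact: sigma_alg.
- exact: sigma_alg.
Qed.

End PhiRelations.

Section FirstElement.
Variable N : nat.
Implicit Types (R S : {set 'I_N.+1}) (T : {set 'I_N}) (i : 'I_N).

Definition behead_set S : {set 'I_N} := [set j | lift ord0 j \in S].

Definition cons_set (b : bool) T : {set 'I_N.+1} :=
  [set i | if unlift ord0 i is Some j then j \in T else b].

Lemma in_behead_set S j : (j \in behead_set S) = (lift ord0 j \in S).
Proof. by rewrite inE. Qed.

Lemma mem0_cons_set b T : (ord0 \in cons_set b T) = b.
Proof. by rewrite inE unlift_none. Qed.

Lemma cons_setK b T : behead_set (cons_set b T) = T.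
Proof. by apply/setP => j; rewrite in_behead_set inE liftK. Qed.

Lemma behead_setK S : cons_set (ord0 \in S) (behead_set S) = S.
Proof. by apply/setP => i; rewrite inE; case: unliftP => [j ->|->] //; rewrite in_behead_set. Qed.

Lemma eq_set_behead R S :
  (R == S) = ((ord0 \in R) == (ord0 \in S)) && (behead_set R == behead_set S).
Proof.
apply/eqP/andP => [->|[/eqP R0 /eqP RS]] //.
by rewrite -(behead_setK R) -(behead_setK S) R0 RS.
Qed.

Lemma card_behead_set S : #|S| = ((ord0 \in S) + #|behead_set S|)%N.
Proof.
rewrite (cardsD1 (@ord0 N)) -(card_imset (behead_set S) (@lift_inj _ ord0)).
congr (_ + _)%N; apply: eq_card => i; rewrite in_setD1.
case: (unliftP ord0 i) => [j ->|->].
  by rewrite mem_imset ?in_behead_set ?neq_lift //; apply: lift_inj.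
by rewrite eqxx; apply/esym/imsetP => -[j _ /eqP]; rewrite (negbTE (neq_lift _ _)).
Qed.

Lemma behead_setU0 S : behead_set (ord0 |: S) = behead_set S.
Proof. by apply/setP => j; rewrite !in_behead_set !inE eq_sym (negbTE (neq_lift _ _)). Qed.

Lemma behead_setUlift S i : behead_set (lift ord0 i |: S) = i |: behead_set S.
Proof. by apply/setP => j; rewrite !in_behead_set !inE (inj_eq (@lift_inj _ ord0)). Qed.

Lemma behead_setD0 S : behead_set (S :\ ord0) = behead_set S.
Proof. by apply/setP => j; rewrite !in_behead_set !inE eq_sym (negbTE (neq_lift _ _)). Qed.

Lemma behead_setDlift S i : behead_set (S :\ lift ord0 i) = behead_set S :\ i.
Proof. by apply/setP => j; rewrite !in_behead_set !inE (inj_eq (@lift_inj _ ord0)). Qed.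

Lemma mem0_setUlift S i : (ord0 \in lift ord0 i |: S) = (ord0 \in S).
Proof. by rewrite !inE (negbTE (neq_lift _ _)). Qed.

Lemma mem0_setDlift S i : (ord0 \in S :\ lift ord0 i) = (ord0 \in S).
Proof. by rewrite !inE neq_lift. Qed.

Lemma behead_set_ltlift S i :
  behead_set [set s in S | (s < lift ord0 i)%N] = [set s in behead_set S | (s < i)%N].
Proof. by apply/setP => j; rewrite !in_behead_set !inE /= ltnS. Qed.

Lemma mem0_set_ltlift S i : (ord0 \in [set s in S | (s < lift ord0 i)%N]) = (ord0 \in S).
Proof. by rewrite !inE andbT. Qed.

Lemma set_lt0 S : [set s in S | (s < @ord0 N)%N] = set0.
Proof. by apply/setP => s; rewrite !inE ltn0 andbF. Qed.

End FirstElement.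

Definition wedge_coef N (i : 'I_N) (R S : {set 'I_N}) : C :=
  if (i \notin S) && (R == i |: S) then (-1) ^+ #|[set s in S | (s < i)%N]| else 0.

Definition contract_coef N (i : 'I_N) (R S : {set 'I_N}) : C :=
  if (i \in S) && (R == S :\ i) then (-1) ^+ #|[set s in S | (s < i)%N]| else 0.

Section CoefficientsOnFirstElement.
Variable N : nat.
Implicit Types (R S : {set 'I_N.+1}) (i : 'I_N).

Lemma wedge_coef_ord0 R S :
  wedge_coef ord0 R S
  = ((ord0 \in R) && (ord0 \notin S) && (behead_set R == behead_set S))%:R.
Proof.
rewrite /wedge_coef eq_set_behead setU11 behead_setU0 set_lt0 cards0 expr0.
by case: (ord0 \in R); case: (ord0 \in S); case: (behead_set R == _).
Qed.

Lemma contract_coef_ord0 R S :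
  contract_coef ord0 R S
  = ((ord0 \notin R) && (ord0 \in S) && (behead_set R == behead_set S))%:R.
Proof.
rewrite /contract_coef eq_set_behead setD11 behead_setD0 set_lt0 cards0 expr0.
by case: (ord0 \in R); case: (ord0 \in S); case: (behead_set R == _).
Qed.

(* The sign (-1)^[0 \in S] is the one produced by the parity operator in the coproduct. *)
Lemma wedge_coef_lift R S i :
  wedge_coef (lift ord0 i) R S
  = ((ord0 \in R) == (ord0 \in S))%:R * (-1) ^+ (ord0 \in S)
    * wedge_coef i (behead_set R) (behead_set S).
Proof.
rewrite /wedge_coef eq_set_behead mem0_setUlift behead_setUlift -in_behead_set.
rewrite card_behead_set mem0_set_ltlift behead_set_ltlift exprD.
by case: (ord0 \in R); case: (ord0 \in S); case: (i \in _); case: (behead_set R == _);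
  rewrite /= ?mul1r ?mul0r ?mulr0.
Qed.

Lemma contract_coef_lift R S i :
  contract_coef (lift ord0 i) R S
  = ((ord0 \in R) == (ord0 \in S))%:R * (-1) ^+ (ord0 \in S)
    * contract_coef i (behead_set R) (behead_set S).
Proof.
rewrite /contract_coef eq_set_behead mem0_setDlift behead_setDlift -in_behead_set.
rewrite card_behead_set mem0_set_ltlift behead_set_ltlift exprD.
by case: (ord0 \in R); case: (ord0 \in S); case: (i \in _); case: (behead_set R == _);
  rewrite /= ?mul1r ?mul0r ?mulr0.
Qed.

End CoefficientsOnFirstElement.

Lemma UNsetK N (S : {set 'I_N}) : UNset (enum_rank S) = S.
Proof. exact: enum_rankK. Qed.

Section CliffordModule.
Variables (N : nat) (z n : 'I_N -> C).
Implicit Types r c : 'I_(UNdim N).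

Lemma UN_aE i r c : UN_a i r c = wedge_coef i (UNset r) (UNset c).
Proof. by rewrite mxE. Qed.

Lemma UN_bE i r c : UN_b i r c = contract_coef i (UNset r) (UNset c).
Proof. by rewrite mxE. Qed.

Lemma UN_numberE i r c :
  (UN_a i * UN_b i) r c = ((i \in UNset c) && (UNset r == UNset c))%:R.
Proof.
rewrite -mulmxE mxE; have [iS|iNS] /= := boolP (i \in UNset c); last first.
  by rewrite big1 // => k _; rewrite UN_bE /contract_coef (negbTE iNS) mulr0.
rewrite (bigD1 (enum_rank (UNset c :\ i))) //= big1 ?addr0 => [|k].
  rewrite UN_aE UN_bE /wedge_coef /contract_coef UNsetK eqxx iS setD11 setD1K //=.
  have -> : [set s in UNset c :\ i | (s < i)%N] = [set s in UNset c | (s < i)%N].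
    by apply/setP => s; rewrite !inE; case: eqP => [->|] //=; rewrite ltnn !andbF.
  by case: (UNset r == _); rewrite /= ?mul0r ?mulr1n // -exprMn mulrNN mulr1 expr1n.
rewrite -(inj_eq enum_val_inj) enum_rankK => /negbTE kN.
by rewrite UN_bE /contract_coef iS kN mulr0.
Qed.

Local Notation U := (UN_pullback z n).

Lemma UN_pullbackXE r c : sX U r c = \sum_(i < N) coefX z i * wedge_coef i (UNset r) (UNset c).
Proof. by rewrite /= /PhiX summxE; apply: eq_bigr => i _; rewrite -mulmxE mul_scalar_mx mxE UN_aE. Qed.

Lemma UN_pullbackYE r c : sY U r c = \sum_(i < N) coefY z i * contract_coef i (UNset r) (UNset c).
Proof. by rewrite /= /PhiY summxE; apply: eq_bigr => i _; rewrite -mulmxE mul_scalar_mx mxE UN_bE. Qed.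

Lemma UN_pullbackGE r c :
  sG U r c = (UNset r == UNset c)%:R * \sum_(i < N) (n i + (i \in UNset c)%:R).
Proof.
rewrite /= /PhiG summxE mulr_sumr; apply: eq_bigr => i _.
rewrite mxE UN_numberE mxE (inj_eq enum_val_inj) -/(UNset r) -/(UNset c).
by case: (_ \in _); case: (_ == _); rewrite /= ?mulr1n ?mulr0n ?mul1r ?mul0r ?addr0 ?add0r.
Qed.

Lemma UN_pullbacktE r c : st U r c = (UNset r == UNset c)%:R * \prod_(i < N) z i.
Proof. by rewrite /= /Phit mxE (inj_eq enum_val_inj) mulr_natl. Qed.

Lemma UN_pullbacktiE r c : sti U r c = (UNset r == UNset c)%:R * (\prod_(i < N) z i)^-1.
Proof. by rewrite /= /Phiti mxE (inj_eq enum_val_inj) mulr_natl. Qed.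

End CliffordModule.

Definition entries_match (M1 M2 : smod) (f : 'I_(sdim M1) -> 'I_(sdim M2)) : Prop :=
  forall r c, [/\ sX M2 (f r) (f c) = sX M1 r c, sY M2 (f r) (f c) = sY M1 r c,
                  sG M2 (f r) (f c) = sG M1 r c, st M2 (f r) (f c) = st M1 r c
                & sti M2 (f r) (f c) = sti M1 r c].

Definition basis_iso (M1 M2 : smod) : Prop :=
  exists (f : 'I_(sdim M1) -> 'I_(sdim M2)) (g : 'I_(sdim M2) -> 'I_(sdim M1)),
    [/\ cancel f g, cancel g f, forall r, spar M2 (f r) = spar M1 r & entries_match f].

Section ReindexMatrix.
Variables (m1 m2 : nat) (f : 'I_m1 -> 'I_m2) (g : 'I_m2 -> 'I_m1).
Hypotheses (fK : cancel f g) (gK : cancel g f).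

Definition reindex_mx : 'M[C]_(m2, m1) := \matrix_(i, j) (i == f j)%:R.

Lemma mul_reindex_mx p (A : 'M[C]_(m1, p)) i j : (reindex_mx *m A) i j = A (g i) j.
Proof.
rewrite mxE (bigD1 (g i)) //= mxE gK eqxx mul1r big1 ?addr0 // => k kg.
by rewrite mxE; case: eqP => [ifk|]; [move: kg; rewrite ifk fK eqxx | rewrite mul0r].
Qed.

Lemma mul_mx_reindex p (B : 'M[C]_(p, m2)) i j : (B *m reindex_mx) i j = B i (f j).
Proof.
rewrite mxE (bigD1 (f j)) //= mxE eqxx mulr1 big1 ?addr0 // => k /negbTE kf.
by rewrite mxE kf mulr0.
Qed.

End ReindexMatrix.

Lemma basis_iso_smod_iso M1 M2 : basis_iso M1 M2 -> smod_iso M1 M2.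
Proof.
case=> f [g [fK gK f_par f_entries]].
have conj (A1 : 'M_(sdim M1)) (A2 : 'M_(sdim M2)) :
    (forall r c, A2 (f r) (f c) = A1 r c) -> reindex_mx f *m A1 = A2 *m reindex_mx f.
  by move=> A12; apply/matrixP => i j; rewrite (mul_reindex_mx fK gK) mul_mx_reindex -A12 gK.
exists (reindex_mx f), (reindex_mx g); split.
- by split; apply/matrixP => i j; rewrite mul_mx_reindex !mxE ?fK ?gK.
- by move=> i j; rewrite mxE; have [->|] := eqVneq i (f j); rewrite ?f_par ?eqxx.
- by split; apply: conj => r c; case: (f_entries r c).
- by apply: conj => r c; case: (f_entries r c).
- by split; apply: conj => r c; case: (f_entries r c).
Qed.

Lemma basis_iso_sym M1 M2 : basis_iso M1 M2 -> basis_iso M2 M1.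
Proof.
case=> f [g [fK gK f_par f_entries]]; exists g, f; split => // [r|r c].
  by rewrite -{2}(gK r) f_par.
by case: (f_entries (g r) (g c)); rewrite !gK.
Qed.

Lemma basis_iso_trans M1 M2 M3 : basis_iso M1 M2 -> basis_iso M2 M3 -> basis_iso M1 M3.
Proof.
case=> f [g [fK gK f_par f_entries]] [f' [g' [fK' gK' f_par' f_entries']]].
exists (f' \o f), (g \o g'); split => [r|r|r|r c] /=.
- by rewrite fK' fK.
- by rewrite gK gK'.
- by rewrite f_par' f_par.
case: (f_entries r c) => <- <- <- <- <-.
exact: f_entries'.
Qed.

Lemma addmxE m1 m2 (A B : 'M[C]_(m1, m2)) i j : (A + B) i j = A i j + B i j.
Proof. by rewrite mxE. Qed.

Section TensorEntries.
Variables (M1 M2 : smod) (x x' : 'I_(sdim M1)) (y y' : 'I_(sdim M2)).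
Local Notation i := (@mxtens_index (sdim M1) (sdim M2) (x, y)).
Local Notation j := (@mxtens_index (sdim M1) (sdim M2) (x', y')).
Local Notation tp := (sti M1 *m parity_mx M1).

Lemma stensorXE : sX (stensor M1 M2) i j = sX M1 x x' * st M2 y y' + tp x x' * sX M2 y y'.
Proof. by rewrite addmxE !tensmxE. Qed.

Lemma stensorYE : sY (stensor M1 M2) i j = sY M1 x x' * st M2 y y' + tp x x' * sY M2 y y'.
Proof. by rewrite addmxE !tensmxE. Qed.

Lemma stensorGE :
  sG (stensor M1 M2) i j = sG M1 x x' * (y == y')%:R + (x == x')%:R * sG M2 y y'.
Proof. by rewrite addmxE !tensmxE !mxE. Qed.

Lemma stensortE : st (stensor M1 M2) i j = st M1 x x' * st M2 y y'.
Proof. exact: tensmxE. Qed.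

Lemma stensortiE : sti (stensor M1 M2) i j = sti M1 x x' * sti M2 y y'.
Proof. exact: tensmxE. Qed.

End TensorEntries.

Lemma stensor_basis_iso M M1 M2 : basis_iso M1 M2 -> basis_iso (stensor M M1) (stensor M M2).
Proof.
case=> f [g [fK gK f_par f_entries]].
pose tens_map m1 m2 (h : 'I_m1 -> 'I_m2) (k : 'I_(sdim M * m1)) : 'I_(sdim M * m2) :=
  mxtens_index ((mxtens_unindex k).1, h (mxtens_unindex k).2).
exists (tens_map _ _ f), (tens_map _ _ g); split => [k|k|k|r c].
- by rewrite /tens_map mxtens_indexK /= fK mxtens_unindexK.
- by rewrite /tens_map mxtens_indexK /= gK mxtens_unindexK.
- by rewrite /tens_map; cbn [spar stensor]; rewrite mxtens_indexK f_par.
case: (mxtens_indexP r) => x y; case: (mxtens_indexP c) => x' y'.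
rewrite /tens_map !mxtens_indexK /=; have [eX eY eG et eti] := f_entries y y'.
by rewrite !stensorXE !stensorYE !stensorGE !stensortE !stensortiE eX eY eG et eti (can_eq fK).
Qed.

Lemma stensor_trivial_basis_iso M U (e : 'I_(sdim U)) :
  (forall k, k = e) -> spar U e = false ->
  [/\ sX U e e = 0, sY U e e = 0, sG U e e = 0, st U e e = 1 & sti U e e = 1] ->
  basis_iso M (stensor M U).
Proof.
move=> eU e_even [eX eY eG et eti].
exists (fun r => mxtens_index (r, e)), (fun k => (mxtens_unindex k).1).
split => [r|k|r|r c]; rewrite ?mxtens_indexK //.
- by case: (mxtens_indexP k) => x y; rewrite mxtens_indexK (eU y).
- by cbn [spar stensor]; rewrite mxtens_indexK e_even addbF.
rewrite stensorXE stensorYE stensorGE stensortE stensortiE eX eY eG et eti eqxx.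
by rewrite !mulr0 !mulr1 !addr0.
Qed.

Lemma basis_iso_stensor_UN0 M (z n : 'I_0 -> C) : basis_iso M (stensor M (UN_pullback z n)).
Proof.
apply: (@stensor_trivial_basis_iso M (UN_pullback z n) (enum_rank (set0 : {set 'I_0}))) => [k||].
- by apply: enum_val_inj; rewrite enum_rankK; apply/setP => -[].
- by rewrite /= UNsetK cards0.
rewrite UN_pullbackXE UN_pullbackYE UN_pullbackGE UN_pullbacktE UN_pullbacktiE.
by rewrite !big_ord0 eqxx invr1 mulr0 mulr1.
Qed.


Definition bool_ord (b : bool) : 'I_2 := if b then ord_max else ord0.

Lemma bool_ordE b : bool_ord b = b :> nat.
Proof. by case: b. Qed.

Lemma eq_bool_ord b b' : (bool_ord b == bool_ord b') = (b == b').
Proof. by case: b; case: b'. Qed.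

Lemma bool_ord_max b : (bool_ord b == ord_max) = b.
Proof. by case: b. Qed.

Lemma bool_ordK (x : 'I_2) : bool_ord (x == ord_max) = x.
Proof. by apply: val_inj; case: x => [[|[|]]]. Qed.

Section VmodEntries.
Variables (z n : C) (b b' : bool).
Local Notation V := (Vmod z n).

Lemma VmodXE : sX V (bool_ord b) (bool_ord b') = (b && ~~ b')%:R.
Proof. by rewrite mxE; case: b; case: b'. Qed.

Lemma VmodYE : sY V (bool_ord b) (bool_ord b') = (~~ b && b')%:R * (z ^+ 2 - z^-2).
Proof. by rewrite mxE; case: b; case: b'; rewrite /= ?mul1r ?mul0r. Qed.

Lemma VmodGE : sG V (bool_ord b) (bool_ord b') = (b == b')%:R * (n + b%:R).
Proof. by rewrite mxE eq_bool_ord bool_ordE; case: b; case: b'; rewrite /= ?mul1r ?mul0r. Qed.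

Lemma VmodtE : st V (bool_ord b) (bool_ord b') = (b == b')%:R * z.
Proof. by rewrite mxE eq_bool_ord mulr_natl. Qed.

Lemma VmodtiE : sti V (bool_ord b) (bool_ord b') = (b == b')%:R * z^-1.
Proof. by rewrite mxE eq_bool_ord mulr_natl. Qed.

Lemma Vmod_tiparityE :
  (sti V *m parity_mx V) (bool_ord b) (bool_ord b') = (b == b')%:R * z^-1 * (-1) ^+ b'.
Proof.
rewrite mul_scalar_mx !mxE eq_bool_ord /=.
by case: b; case: b'; rewrite /= ?mul1r ?mul0r ?mulr0 ?mulr1.
Qed.

End VmodEntries.

Section SplitFirstFactor.
Variables (N : nat) (z n : 'I_N.+1 -> C).
Local Notation z' := (fun j : 'I_N => z (lift ord0 j)).
Local Notation n' := (fun j : 'I_N => n (lift ord0 j)).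
Local Notation U := (UN_pullback z n).
Local Notation VU' := (stensor (Vmod (z ord0) (n ord0)) (UN_pullback z' n')).

Definition split_first (r : 'I_(UNdim N.+1)) : 'I_(2 * UNdim N) :=
  mxtens_index (bool_ord (ord0 \in UNset r), enum_rank (behead_set (UNset r))).

Definition join_first (k : 'I_(2 * UNdim N)) : 'I_(UNdim N.+1) :=
  enum_rank (cons_set ((mxtens_unindex k).1 == ord_max) (UNset (mxtens_unindex k).2)).

Lemma split_firstK : cancel split_first join_first.
Proof.
move=> r; rewrite /join_first mxtens_indexK /= bool_ord_max UNsetK behead_setK.
exact: enum_valK.
Qed.

Lemma join_firstK : cancel join_first split_first.
Proof.
move=> k; case: (mxtens_indexP k) => x y.
by rewrite /split_first /join_first mxtens_indexK UNsetK mem0_cons_set cons_setK bool_ordK enum_valK.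
Qed.

Lemma split_first_parity r : spar VU' (split_first r) = spar U r.
Proof.
rewrite /split_first; cbn [spar stensor Vmod UN_pullback].
rewrite mxtens_indexK /= bool_ordE UNsetK [in RHS]card_behead_set oddD.
by case: (ord0 \in UNset r).
Qed.

Variables r c : 'I_(UNdim N.+1).
Local Notation R := (UNset r).
Local Notation S := (UNset c).

Lemma split_firstXE : sX VU' (split_first r) (split_first c) = sX U r c.
Proof.
rewrite stensorXE VmodXE Vmod_tiparityE !UN_pullbackXE UN_pullbacktE !UNsetK.
rewrite [in RHS]big_ord_recl coefX_ord0 wedge_coef_ord0.
under [X in _ = _ + X]eq_bigr do rewrite coefX_lift wedge_coef_lift.
rewrite mulr_sumr -!mulnb !natrM.
move: (ord0 \in R) (ord0 \in S) (behead_set R == behead_set S) => hR hS e.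
by congr (_ + _); [ring | apply: eq_bigr => i _; ring].
Qed.

Lemma split_firstYE : sY VU' (split_first r) (split_first c) = sY U r c.
Proof.
rewrite stensorYE VmodYE Vmod_tiparityE !UN_pullbackYE UN_pullbacktE !UNsetK.
rewrite [in RHS]big_ord_recl coefY_ord0 contract_coef_ord0.
under [X in _ = _ + X]eq_bigr do rewrite coefY_lift contract_coef_lift.
rewrite mulr_sumr -!mulnb !natrM.
move: (ord0 \in R) (ord0 \in S) (behead_set R == behead_set S) => hR hS e.
by congr (_ + _); [ring | apply: eq_bigr => i _; ring].
Qed.

Lemma split_firstGE : sG VU' (split_first r) (split_first c) = sG U r c.
Proof.
rewrite stensorGE VmodGE !UN_pullbackGE !UNsetK (can_eq (@enum_rankK _)) eq_bool_ord.
rewrite [in RHS]big_ord_recl eq_set_behead -!mulnb !natrM.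
under [X in _ = _ * (_ + X)]eq_bigr do rewrite -in_behead_set.
move: (ord0 \in R) (ord0 \in S) (behead_set R == behead_set S) => hR hS e.
by case: hR; case: hS => /=; ring.
Qed.

Lemma split_firsttE : st VU' (split_first r) (split_first c) = st U r c.
Proof.
rewrite stensortE VmodtE !UN_pullbacktE !UNsetK [in RHS]big_ord_recl.
rewrite eq_set_behead -!mulnb !natrM.
move: (ord0 \in R) (ord0 \in S) (behead_set R == behead_set S) => hR hS e.
by ring.
Qed.

Lemma split_firsttiE : sti VU' (split_first r) (split_first c) = sti U r c.
Proof.
rewrite stensortiE VmodtiE !UN_pullbacktiE !UNsetK [in RHS]big_ord_recl invfM.
rewrite eq_set_behead -!mulnb !natrM.
move: (ord0 \in R) (ord0 \in S) (behead_set R == behead_set S) => hR hS e.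
by ring.
Qed.

End SplitFirstFactor.

Lemma UN_pullback_split N (z n : 'I_N.+1 -> C) :
  basis_iso (UN_pullback z n)
    (stensor (Vmod (z ord0) (n ord0))
       (UN_pullback (fun j => z (lift ord0 j)) (fun j => n (lift ord0 j)))).
Proof.
exists (@split_first N), (@join_first N); split.
- exact: split_firstK.
- exact: join_firstK.
- exact: split_first_parity.
- by move=> r c; split; [apply: split_firstXE | apply: split_firstYE | apply: split_firstGE
                       | apply: split_firsttE | apply: split_firsttiE].
Qed.

Lemma tens_list_cons p s :
  s != [::] -> tens_list (p :: s) = stensor (Vmod p.1 p.2) (tens_list s).
Proof. by case: s. Qed.

Lemma UN_pullback_basis_iso N (z n : 'I_N.+1 -> C) :
  basis_iso (UN_pullback z n) (tens_list [seq (z i, n i) | i <- enum 'I_N.+1]).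
Proof.
elim: N z n => [|N IH] z n; apply: basis_iso_trans (UN_pullback_split z n) _.
  rewrite enum_ordSl enum_ord0 /=.
  exact/basis_iso_sym/basis_iso_stensor_UN0.
have -> : [seq (z i, n i) | i <- enum 'I_N.+2]
          = (z ord0, n ord0) :: [seq (z (lift ord0 i), n (lift ord0 i)) | i <- enum 'I_N.+1].
  by rewrite enum_ordSl /= -map_comp.
rewrite tens_list_cons; last by rewrite enum_ordSl.
exact/stensor_basis_iso/IH.
Qed.

Unset Implicit Arguments.

Theorem mainTheorem1 (N : nat) (z n : 'I_N -> C) :
  (0 < N)%N -> (forall i, z i != 0) ->
  (forall (A : algType C) (a b : 'I_N -> A) (sigma : A -> A),
     cliff_rels a b -> is_parity_aut sigma ->
     (forall i, sigma (a i) = - a i /\ sigma (b i) = - b i) ->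
     let sc := fun c : C => c%:A in
     Uq_rels (PhiX sc z a) (PhiY sc z b) (PhiG sc n a b) (Phit sc z) (Phiti sc z)
     /\ [/\ sigma (PhiX sc z a) = - PhiX sc z a,
            sigma (PhiY sc z b) = - PhiY sc z b,
            sigma (PhiG sc n a b) = PhiG sc n a b,
            sigma (Phit sc z) = Phit sc z
          & sigma (Phiti sc z) = Phiti sc z])
  /\
  smod_iso (UN_pullback z n) (tens_list [seq (z i, n i) | i <- enum 'I_N]).
Proof.
move=> N_gt0 z_neq0; split=> [A a b sigma cliff parity odd_ab sc|].
  by split; [exact: Uq_rels_Phi | exact: parity_Phi].
case: N z n N_gt0 z_neq0 => // N z n _ _.
exact/basis_iso_smod_iso/UN_pullback_basis_iso.
Qed.
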